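(* In the Bayesian offline learning setting for $n$-round dynamic inference described in the context, fix $i\in\{1,\ldots,n\}$ and any initial distribution $P_{X_i}$ of the round-$i$ observation. Then $$\min_{\psi_{m,i},\ldots,\psi_{m,n}}\mathbb E\Big[\sum_{j=i}^n\ell(X_j,Y_j,\hat Y_j)\Big]=\mathbb E\big[V^*_{m,i}(\pi_m,X_i)\big],$$ and the minimum is achieved by the estimators $(\psi^*_{m,i},\ldots,\psi^*_{m,n})$.
   Context: Setting (Bayesian offline learning for $n$-round dynamic inference). $\mathsf X,\mathsf Y,\hat{\mathsf Y},\mathsf W$ are measurable spaces and $\Delta$ is the space of probability distributions on $\mathsf W$. The following are given: probability transition kernels $K_j(\cdot\mid x,\hat y)$ from $\mathsf X\times\hat{\mathsf Y}$ to $\mathsf X$; a parametrized family of kernels $\{P_{Y|X,w}:w\in\mathsf W\}$ from $\mathsf X$ to $\mathsf Y$; a prior $P_W$ on $\mathsf W$; a conditional distribution $P_{Z^m|W}$ of an $m$-sample training dataset $Z^m$ with values in $(\mathsf X\times\hat{\mathsf Y})^m$; and a loss $\ell:\mathsf X\times\mathsf Y\times\hat{\mathsf Y}\to\mathbb R$. The estimators $\psi_{m,j}$ map $(Z^m,X^j,\hat Y^{j-1})$ (or, for the rounds considered, the available past from round $i$ on together with $Z^m$) to $\hat{\mathsf Y}$. The process is as follows. $W\sim P_W$, and $Z^m\mid W\sim P_{Z^m|W}$. $X_i\sim P_{X_i}$ is independent of $(W,Z^m)$. For $j\ge i$: given all previously generated variables, $Y_j\sim P_{Y|X,W}(\cdot\mid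 X_j,W)$; $\hat Y_j=\psi_{m,j}(\cdots)$; and $X_{j+1}\sim K_{j+1}(\cdot\mid X_j,\hat Y_j)$. Let $\pi_m(\cdot)=\mathbb P[W\in\cdot\mid Z^m]$ and $\tilde\ell(\pi,x,\hat y)=\int_{\mathsf W}\int_{\mathsf Y}\pi(\mathrm dw)P_{Y|X,W}(\mathrm dy\mid x,w)\ell(x,y,\hat y)$. Define $Q^*_{m,n}=\tilde\ell$, $V^*_{m,j}(\pi,x)=\min_{\hat y}Q^*_{m,j}(\pi,x,\hat y)$ for $j=n,\ldots,1$, and $Q^*_{m,j}(\pi,x,\hat y)=\tilde\ell(\pi,x,\hat y)+\int K_{j+1}(\mathrm dx'\mid x,\hat y)V^*_{m,j+1}(\pi,x')$ for $j=n-1,\ldots,1$. Set $\psi^*_{m,j}(\pi,x)=\arg\min_{\hat y}Q^*_{m,j}(\pi,x,\hat y)$, used as $\hat Y_j=\psi^*_{m,j}(\pi_m,X_j)$. *)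

From HB Require Import structures.
From mathcomp Require Import all_boot all_order all_algebra.
From mathcomp Require Import all_classical all_reals all_analysis.

Set Implicit Arguments.
Unset Strict Implicit.
Unset Printing Implicit Defensive.

Import Order.TTheory GRing.Theory Num.Theory.
Local Open Scope classical_set_scope.
Local Open Scope ereal_scope.

(* Spaces: X (observations), Y (labels), Yh (estimates), W (parameter),
   Zm (space of the m-sample training data set Z^m).
   Kernels:  K j : (x, yh) |-> K_j(. | x, yh)           (X * Yh ~> X)
             PY  : (x, w)  |-> P_{Y|X,W}(. | x, w)       (X * W ~> Y)
             PZW : w       |-> P_{Z^m|W}(. | w)           (W ~> Zm)
   Posterior: post : z |-> pi_m = P[W in . | Z^m = z]     (Zm ~> W)       *)

Section dynamic_inference.
Context {R : realType} {dX dY dYh dW dZ : measure_display}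
  (X : measurableType dX) (Y : measurableType dY) (Yh : measurableType dYh)
  (W : measurableType dW) (Zm : measurableType dZ).

(* A probability kernel [post] is a version of the posterior (regular
   conditional distribution of W given Z^m) when, for all measurable A, B,
     P[W in A, Z^m in B] = E[ 1_B(Z^m) * post(Z^m)(A) ].                   *)
Definition is_posterior (PW : probability W R) (PZW : R.-pker W ~> Zm)
    (post : R.-pker Zm ~> W) : Prop :=
  forall (A : set W) (B : set Zm), measurable A -> measurable B ->
    \int[PW]_(w in A) PZW w B =
    \int[PW]_w \int[PZW w]_(z in B) post z A.

(* Information available at round i + k: (Z^m, X_i, Yh_i, X_{i+1}, ...,
   Yh_{i+k-1}, X_{i+k}), encoded as the nested pair
   ((...(((z, x_i), yh_i), x_{i+1}) ...), yh_{i+k-1}), x_{i+k}). *)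
Fixpoint Hist (k : nat) : {d : measure_display & measurableType d} :=
  match k with
  | 0 => existT _ _ ((Zm * X)%type : measurableType _)
  | k'.+1 => existT _ _ (((projT2 (Hist k') * Yh) * X)%type : measurableType _)
  end.

Definition hist_x (k : nat) : projT2 (Hist k) -> X :=
  match k with 0 => snd | _.+1 => snd end.

Fixpoint hist_z (k : nat) : projT2 (Hist k) -> Zm :=
  match k with
  | 0 => fst
  | k'.+1 => fun h => hist_z h.1.1
  end.

(* A sequence of estimators: psi k is the estimator psi_{m,i+k} used at round
   i + k, a function of the available information. *)
Definition policy := forall k : nat, projT2 (Hist k) -> Yh.

(* psi_{m,i}, ..., psi_{m,n} are (measurable) estimators; N = n - i *)
Definition admissible (N : nat) (psi : policy) : Prop :=
  forall k, (k <= N)%N -> measurable_fun [set: projT2 (Hist k)] (psi k).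

Variables (K : nat -> R.-pker (X * Yh)%type ~> X)
          (PY : R.-pker (X * W)%type ~> Y)
          (ell : X -> Y -> Yh -> R).

(* Cost-to-go of the process under the policy psi, for a fixed value w of W,
   from round j = i + k with r = n - j rounds remaining, given the history h:
     E[ sum_{t=j}^{n} ell(X_t, Y_t, Yh_t) | W = w, history h ],
   where Y_j ~ P_{Y|X,W}(.|X_j, w), Yh_j = psi_j(h), X_{j+1} ~ K_{j+1}(.|X_j, Yh_j). *)
Fixpoint cost_to_go (i : nat) (psi : policy) (r k : nat) (w : W)
    : projT2 (Hist k) -> \bar R :=
  fun h =>
  match r with
  | 0 => \int[PY (hist_x h, w)]_y (ell (hist_x h) y (psi k h))%:E
  | r'.+1 =>
      \int[PY (hist_x h, w)]_y
        ((ell (hist_x h) y (psi k h))%:E +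
         \int[K (i + k).+1 (hist_x h, psi k h)]_x'
            cost_to_go i psi r' w (((h, psi k h), x') : projT2 (Hist k.+1)))
  end.

(* E[ sum_{j=i}^{n} ell(X_j, Y_j, Yh_j) ] for W ~ PW, Z^m | W ~ PZW,
   X_i ~ PXi independent of (W, Z^m). *)
Definition expected_loss (PW : probability W R) (PZW : R.-pker W ~> Zm)
    (PXi : probability X R) (i n : nat) (psi : policy) : \bar R :=
  \int[PW]_w \int[PZW w]_z \int[PXi]_x
     @cost_to_go i psi (n - i)%N 0%N w ((z, x) : projT2 (Hist 0)).

Definition ltilde (pi : measure W R) (x : X) (yh : Yh) : \bar R :=
  \int[pi]_w \int[PY (x, w)]_y (ell x y yh)%:E.

(* Qaux n r = Q*_{m, n - r}  (backward recursion, r = 0 is the last round) *)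
Fixpoint Qaux (n r : nat) (pi : measure W R) (x : X) (yh : Yh)
    : \bar R :=
  match r with
  | 0 => ltilde pi x yh
  | r'.+1 => ltilde pi x yh +
      \int[K (n - r')%N (x, yh)]_x'
         ereal_inf (range (fun b : Yh => Qaux n r' pi x' b))
  end.

Definition Qstar (n j : nat) := Qaux n (n - j).
Definition Vstar (n j : nat) (pi : measure W R) (x : X) : \bar R :=
  ereal_inf (range (fun b : Yh => Qstar n j pi x b)).

Definition star_policy (post : R.-pker Zm ~> W)
    (psistar : nat -> measure W R -> X -> Yh) (i : nat) : policy :=
  fun k h => psistar (i + k)%N (post (hist_z h)) (hist_x h).

End dynamic_inference.

From HB Require Import structures.
From mathcomp Require Import all_boot all_order all_algebra.
From mathcomp Require Import all_classical all_reals all_analysis.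
From mathcomp Require Import measurable_realfun zify.
Import Order.TTheory GRing.Theory Num.Theory.
Local Open Scope classical_set_scope.
Local Open Scope ereal_scope.

Set Implicit Arguments.
Unset Strict Implicit.
Unset Printing Implicit Defensive.

(* Let W' be drawn from the posterior pi_m of Z^m.  The posterior
   property says that (W, Z^m) and (W', Z^m) have the same law on measurable
   rectangles, hence (by uniqueness of measures on a pi-system) the same law;
   so in the expected loss the unknown parameter W may be replaced by W'.
   Conditionally on Z^m = z, the expected cost-to-go of a policy then only
   involves the fixed belief post z, and backward induction on the number of
   remaining rounds shows that it is at least Q*_{m,j} at the action taken,
   hence at least V*_{m,j}, with equality along the estimators psi*_{m,j},
   which attain the infimum defining V*_{m,j}. *)

(* V* is an infimum over all estimates and need not be measurable. *)
Lemma ge0_le_integral_nonmeas d (T : measurableType d) (R : realType)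
    (mu : measure T R) (f g : T -> \bar R) :
  (forall x, 0 <= f x) -> (forall x, f x <= g x) ->
  \int[mu]_x f x <= \int[mu]_x g x.
Proof.
move=> f0 fg; have g0 x : 0 <= g x by exact: le_trans (f0 x) (fg x).
rewrite !ge0_integralTE//; apply: le_ereal_sup => _ [h hf <-].
by exists h => // x; exact: le_trans (hf x) (fg x).
Qed.

Lemma ereal_inf_range_attained (T : Type) (R : realType) (Q : T -> \bar R) a :
  (forall b, Q a <= Q b) -> ereal_inf (range Q) = Q a.
Proof.
move=> Qa; apply/le_anti/andP; split; first by apply: ereal_inf_lbound; exists a.
by apply: le_ereal_inf_tmp => _ [b _ <-]; exact: Qa.
Qed.

Section finite_measure_of.
Context d (T : measurableType d) (R : realType) (mu : measure T R).

Definition finite_measure_of (mufin : mu [set: T] < +oo) : set T -> \bar R := mu.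

Variable mufin : mu [set: T] < +oo.
HB.instance Definition _ := Measure.on (finite_measure_of mufin).
HB.instance Definition _ := Measure_isFinite.Build _ _ _ (finite_measure_of mufin)
  (lty_fin_num_fun mufin).

End finite_measure_of.

Lemma fubini_tonelli_finite d1 d2 (T1 : measurableType d1) (T2 : measurableType d2)
    (R : realType) (m1 : measure T1 R) (m2 : measure T2 R)
    (f : T1 * T2 -> \bar R) :
  m1 [set: T1] < +oo -> m2 [set: T2] < +oo ->
  measurable_fun [set: T1 * T2] f -> (forall t, 0 <= f t) ->
  \int[m1]_x \int[m2]_y f (x, y) = \int[m2]_y \int[m1]_x f (x, y).
Proof.
move=> m1fin m2fin.
exact: (@fubini_tonelli _ _ _ _ R (finite_measure_of m1fin) (finite_measure_of m2fin)).
Qed.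

Section kprecomp.
Context d d' d'' (T : measurableType d) (A : measurableType d') (B : measurableType d'')
  (R : realType) (k : R.-pker A ~> B) (g : T -> A).

Definition kprecomp (mg : measurable_fun [set: T] g) (t : T) : measure B R :=
  k (g t).

Variable mg : measurable_fun [set: T] g.

Let measurable_kprecomp U : measurable U -> measurable_fun [set: T] (kprecomp mg ^~ U).
Proof. by move=> mU; exact: measurableT_comp (measurable_kernel k U mU) mg. Qed.

HB.instance Definition _ := isKernel.Build _ _ T B R (kprecomp mg) measurable_kprecomp.

Let kprecomp_prob t : kprecomp mg t [set: B] = 1. Proof. exact: prob_kernel. Qed.

HB.instance Definition _ := Kernel_isProbability.Build _ _ T B R (kprecomp mg) kprecomp_prob.

End kprecomp.

Lemma measurable_fun_integral_pker d d' d'' (T : measurableType d)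
    (A : measurableType d') (B : measurableType d'') (R : realType)
    (k : R.-pker A ~> B) (g : T -> A) (f : T * B -> \bar R) :
  measurable_fun [set: T] g -> measurable_fun [set: T * B] f -> (forall t, 0 <= f t) ->
  measurable_fun [set: T] (fun t => \int[k (g t)]_y f (t, y)).
Proof.
move=> mg mf f0; exact: (measurable_fun_integral_finite_kernel f (kprecomp k mg)).
Qed.

Section integral_indic_setX.
Context d1 d2 (T1 : measurableType d1) (T2 : measurableType d2) (R : realType).
Implicit Types (A : set T1) (B : set T2).

Lemma integral_indic_setX_fst (mu : measure T2 R) A B x : measurable B ->
  \int[mu]_y (\1_(A `*` B) (x, y) : R)%:E = mu B * (\1_A x)%:E.
Proof.
move=> mB; have [xA|xA] := boolP (x \in A).
  rewrite indicE xA mule1 -[in RHS](setIT B) -integral_indic//.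
  by apply: eq_integral => y _; rewrite !indicE in_setX xA.
rewrite indicE (negbTE xA) mule0; apply: integral0_eq => y _.
by rewrite indicE in_setX (negbTE xA).
Qed.

Lemma integral_indic_setX_snd (mu : measure T1 R) A B y : measurable A ->
  \int[mu]_x (\1_(A `*` B) (x, y) : R)%:E = mu A * (\1_B y)%:E.
Proof.
move=> mA; have [yB|yB] := boolP (y \in B).
  rewrite indicE yB mule1 -[in RHS](setIT A) -integral_indic//.
  by apply: eq_integral => x _; rewrite !indicE in_setX yB andbT.
rewrite indicE (negbTE yB) mule0; apply: integral0_eq => x _.
by rewrite indicE in_setX (negbTE yB) andbF.
Qed.

End integral_indic_setX.

Section posterior.
Context {R : realType} {dW dZ : measure_display}
  (W : measurableType dW) (Zm : measurableType dZ).
Variables (PW : probability W R) (PZW : R.-pker W ~> Zm) (post : R.-pker Zm ~> W).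

Let kW := kprobability
  (measurable_cst (PW : pprobability W R) : measurable_fun [set: unit] _).
Let kZ := kprecomp PZW (@measurable_snd _ _ unit W).
Let kpost := kprecomp post (@measurable_snd _ _ (unit * W)%type Zm).

Let measurable_pair_WZ :
  measurable_fun [set: (unit * W) * Zm] (fun p => (p.1.2, p.2)).
Proof.
exact: measurable_fun_pair (measurableT_comp measurable_snd measurable_fst) measurable_snd.
Qed.

Let measurable_pair_postZ :
  measurable_fun [set: ((unit * W) * Zm) * W] (fun p => (p.2, p.1.2)).
Proof.
exact: measurable_fun_pair measurable_snd (measurableT_comp measurable_snd measurable_fst).
Qed.

(* Kernels out of the one-point space: [joint tt] is the law of (W, Z^m) and
   [joint_post tt] the law of (W', Z^m), with W' drawn from [post Z^m]. *)
Let joint := kW \; (kZ \; kdirac measurable_pair_WZ).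
Let joint_post := kW \; (kZ \; (kpost \; kdirac measurable_pair_postZ)).

Let integral_joint f : measurable_fun [set: W * Zm] f -> (forall p, 0 <= f p) ->
  \int[joint tt]_p f p = \int[PW]_w \int[PZW w]_z f (w, z).
Proof.
move=> mf f0; rewrite integral_kcomp//; apply: eq_integral => w _.
rewrite integral_kcomp//; apply: eq_integral => z _.
by rewrite integral_dirac// diracT mul1e.
Qed.

Let integral_joint_post f : measurable_fun [set: W * Zm] f -> (forall p, 0 <= f p) ->
  \int[joint_post tt]_p f p = \int[PW]_w \int[PZW w]_z \int[post z]_w' f (w', z).
Proof.
move=> mf f0; rewrite integral_kcomp//; apply: eq_integral => w _.
rewrite integral_kcomp//; apply: eq_integral => z _.
rewrite integral_kcomp//; apply: eq_integral => w' _.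
by rewrite integral_dirac// diracT mul1e.
Qed.

Let measurable_indic_setX (A : set W) (B : set Zm) : measurable A -> measurable B ->
  measurable_fun [set: W * Zm] (fun p => (\1_(A `*` B) p : R)%:E).
Proof. by move=> mA mB; apply/measurable_EFinP/measurable_indic; exact: measurableX. Qed.

Let joint_setX (A : set W) (B : set Zm) : measurable A -> measurable B ->
  joint tt (A `*` B) = \int[PW]_(w in A) PZW w B.
Proof.
move=> mA mB; rewrite -(setIT (A `*` B)) -integral_indic ?integral_joint//;
  last exact: measurableX.
  rewrite [RHS]integral_mkcond; apply: eq_integral => w _.
  by rewrite integral_indic_setX_fst// epatch_indic.
exact: measurable_indic_setX.
Qed.

Let joint_post_setX (A : set W) (B : set Zm) : measurable A -> measurable B ->
  joint_post tt (A `*` B) = \int[PW]_w \int[PZW w]_(z in B) post z A.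
Proof.
move=> mA mB; rewrite -(setIT (A `*` B)) -integral_indic ?integral_joint_post//;
  last exact: measurableX.
  apply: eq_integral => w _; rewrite [RHS]integral_mkcond; apply: eq_integral => z _.
  by rewrite integral_indic_setX_snd// epatch_indic.
exact: measurable_indic_setX.
Qed.

Let setI_closed_setX :
  setI_closed [set A `*` B | A in @measurable _ W & B in @measurable _ Zm].
Proof.
move=> _ _ [A1 mA1 [B1 mB1 <-]] [A2 mA2 [B2 mB2 <-]].
exists (A1 `&` A2); first exact: measurableI.
by exists (B1 `&` B2); [exact: measurableI|rewrite setXI].
Qed.

Let joint_setT : joint tt [set: W * Zm] = 1.
Proof.
have kW1 : \int[kW tt]_w (1 : R)%:E = 1 by rewrite integral_cst// mul1e prob_kernel.
have kZ1 w : \int[kZ (tt, w)]_z (1 : R)%:E = 1.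
  by rewrite integral_cst// mul1e prob_kernel.
transitivity (\int[kW tt]_w \int[kZ (tt, w)]_z
  @kdirac _ _ _ _ R _ measurable_pair_WZ ((tt, w), z) [set: W * Zm]); first by [].
rewrite -[RHS]kW1; apply: eq_integral => w _; rewrite -[RHS](kZ1 w).
by apply: eq_integral => z _; rewrite prob_kernel.
Qed.

Hypothesis hpost : is_posterior PW PZW post.

Let joint_postE E : measurable E -> joint tt E = joint_post tt E.
Proof.
apply: (measure_unique [set A `*` B | A in measurable & B in measurable] (fun=> setT)).
- exact: measurable_prod_measurableType.
- exact: setI_closed_setX.
- by move=> _; exists setT => //; exists setT => //; rewrite setXTT.
- by apply/seteqP; split => // p _; exists 0%N.
- by move=> _ [A mA [B mB <-]]; rewrite joint_setX// joint_post_setX// hpost.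
- by move=> _; rewrite joint_setT ltry.
Qed.

Lemma integral_posterior (g : W * Zm -> \bar R) :
  measurable_fun [set: W * Zm] g -> (forall p, 0 <= g p) ->
  \int[PW]_w \int[PZW w]_z g (w, z) =
  \int[PW]_w \int[PZW w]_z \int[post z]_w' g (w', z).
Proof.
move=> mg g0; rewrite -(integral_joint mg g0) -(integral_joint_post mg g0).
by apply: eq_measure_integral => E mE _; rewrite joint_postE.
Qed.

End posterior.

Section cost_to_go.
Context {R : realType} {dX dY dYh dW dZ : measure_display}
  (X : measurableType dX) (Y : measurableType dY) (Yh : measurableType dYh)
  (W : measurableType dW) (Zm : measurableType dZ).
Variables (K : nat -> R.-pker (X * Yh)%type ~> X) (PY : R.-pker (X * W)%type ~> Y)
  (ell : X -> Y -> Yh -> R).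
Hypothesis mell :
  measurable_fun [set: (X * Y * Yh)%type] (fun t => ell t.1.1 t.1.2 t.2).
Hypothesis ell_ge0 : forall x y yh, (0 <= ell x y yh)%R.
Variable i : nat.

Local Notation H k := (projT2 (Hist X Yh Zm k)).
Local Notation cost := (cost_to_go K PY ell i).

Lemma measurable_hist_x k : measurable_fun [set: H k] (@hist_x _ _ _ X Yh Zm k).
Proof. by case: k => [|k]; exact: measurable_snd. Qed.

Lemma measurable_hist_z k : measurable_fun [set: H k] (@hist_z _ _ _ X Yh Zm k).
Proof.
elim: k => [|k IH]; first exact: measurable_fst.
exact: measurableT_comp IH (measurableT_comp measurable_fst measurable_fst).
Qed.

Let measurable_ell d (T : measurableType d) (a : T -> X) (b : T -> Y) (c : T -> Yh) :
  measurable_fun [set: T] a -> measurable_fun [set: T] b -> measurable_fun [set: T] c ->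
  measurable_fun [set: T] (fun t => (ell (a t) (b t) (c t))%:E).
Proof.
move=> ma mb mc; apply/measurable_EFinP.
apply: (measurableT_comp mell (g := fun t => (a t, b t, c t))).
by apply: measurable_fun_pair => //; exact: measurable_fun_pair.
Qed.

Lemma cost_to_go_ge0 psi r k w (h : H k) : 0 <= cost psi r w h.
Proof.
elim: r k w h => [|r IH] k w h /=; apply: integral_ge0 => y _; first by rewrite lee_fin.
by rewrite adde_ge0 ?lee_fin//; apply: integral_ge0 => x' _; exact: IH.
Qed.

Let measurable_stage k (F : (W * H k) * Y -> \bar R) :
  measurable_fun [set: (W * H k) * Y] F -> (forall q, 0 <= F q) ->
  measurable_fun [set: W * H k] (fun p => \int[PY (hist_x p.2, p.1)]_y F (p, y)).
Proof.
move=> mF F0; apply: measurable_fun_integral_pker mF F0.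
exact: measurable_fun_pair (measurableT_comp (@measurable_hist_x k) measurable_snd)
  measurable_fst.
Qed.

Let measurable_loss psi k : measurable_fun [set: H k] (psi k) ->
  measurable_fun [set: (W * H k) * Y]
    (fun q => (ell (hist_x q.1.2) q.2 (psi k q.1.2))%:E).
Proof.
move=> mpsik; have mh : measurable_fun [set: (W * H k) * Y] (fun q => q.1.2).
  exact: measurableT_comp measurable_snd measurable_fst.
apply: measurable_ell; [exact: measurableT_comp (@measurable_hist_x k) mh|
  exact: measurable_snd|exact: measurableT_comp mpsik mh].
Qed.

Let measurable_next psi k : measurable_fun [set: H k] (psi k) ->
  measurable_fun [set: (W * H k) * X]
    (fun q => (q.1.1, ((q.1.2, psi k q.1.2), q.2) : H k.+1)).
Proof.
move=> mpsik; have mh : measurable_fun [set: (W * H k) * X] (fun q => q.1.2).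
  exact: measurableT_comp measurable_snd measurable_fst.
apply: measurable_fun_pair; first exact: measurableT_comp measurable_fst measurable_fst.
apply: measurable_fun_pair => //.
by apply: measurable_fun_pair => //; exact: measurableT_comp mpsik mh.
Qed.

Lemma measurable_cost_to_go psi r k : admissible (k + r) psi ->
  measurable_fun [set: W * H k] (fun p => cost psi r p.1 p.2).
Proof.
elim: r k => [|r IH] k mpsi.
  apply: measurable_stage (measurable_loss _) _ => [|q]; last by rewrite lee_fin.
  by apply: mpsi; rewrite addn0.
have mpsik : measurable_fun [set: H k] (psi k) by apply: mpsi; exact: leq_addr.
have mcost : measurable_fun [set: (W * H k) * X]
    (fun q => cost psi r q.1.1 (((q.1.2, psi k q.1.2), q.2) : H k.+1)).
  have mpsi' : admissible (k.+1 + r) psi by rewrite addSnnS.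
  exact: measurableT_comp (IH _ mpsi') (measurable_next mpsik).
pose G p := \int[K (i + k).+1 (hist_x p.2, psi k p.2)]_x'
  cost psi r p.1 (((p.2, psi k p.2), x') : H k.+1).
have mG : measurable_fun [set: W * H k] G.
  apply: measurable_fun_integral_pker mcost _ => [|q]; last exact: cost_to_go_ge0.
  exact: measurable_fun_pair (measurableT_comp (@measurable_hist_x k) measurable_snd)
    (measurableT_comp mpsik measurable_snd).
apply: (@measurable_stage _ (fun q => (ell (hist_x q.1.2) q.2 (psi k q.1.2))%:E + G q.1)).
  exact: emeasurable_funD (measurable_loss mpsik) (measurableT_comp mG measurable_fst).
move=> q; rewrite adde_ge0 ?lee_fin//.
by apply: integral_ge0 => x' _; exact: cost_to_go_ge0.
Qed.

Lemma integral_cost_to_goS psi r k (pi : measure W R) (h : H k) :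
  pi [set: W] = 1 -> admissible (k.+1 + r) psi ->
  \int[pi]_w cost psi r.+1 w h =
  ltilde PY ell pi (hist_x h) (psi k h) +
  \int[K (i + k).+1 (hist_x h, psi k h)]_x'
    \int[pi]_w cost psi r w (((h, psi k h), x') : H k.+1).
Proof.
move=> pi1 mpsi; set x := hist_x h; set yh := psi k h.
pose c q := cost psi r q.1 (((h, yh), q.2) : H k.+1).
have mc : measurable_fun [set: W * X] c.
  apply: (measurableT_comp (measurable_cost_to_go mpsi)
    (g := fun q : W * X => (q.1, ((h, yh), q.2) : H k.+1))).
  by apply: measurable_fun_pair => //; exact: measurable_fun_pair.
have c0 q : 0 <= c q by exact: cost_to_go_ge0.
pose G w := \int[K (i + k).+1 (x, yh)]_x' c (w, x').
have mG : measurable_fun [set: W] G.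
  exact: measurable_fun_integral_pker (measurable_cst _) mc c0.
pose L w := \int[PY (x, w)]_y (ell x y yh)%:E.
have mL : measurable_fun [set: W] L.
  apply: (@measurable_fun_integral_pker _ _ _ _ _ _ _ PY (fun w => (x, w))
    (fun q => (ell x q.2 yh)%:E)) => [||q]; last by rewrite lee_fin.
    exact: measurable_fun_pair.
  exact: measurable_ell.
have G0 w : 0 <= G w by apply: integral_ge0 => x' _.
have L0 w : 0 <= L w by apply: integral_ge0 => y _; rewrite lee_fin.
transitivity (\int[pi]_w (L w + G w)).
  apply: eq_integral => w _ /=; rewrite ge0_integralD//.
  - by rewrite integral_cst// prob_kernel mule1.
  - by move=> y _; rewrite lee_fin.
  - by apply: measurable_ell.
  - by move=> y _; exact: G0.
rewrite ge0_integralD//; congr (_ + _).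
by apply: fubini_tonelli_finite; rewrite ?pi1 ?prob_kernel ?ltry.
Qed.

Lemma Qaux_ge0 n r (pi : measure W R) x yh : 0 <= Qaux K PY ell n r pi x yh.
Proof.
have ltilde_ge0 x' yh' : 0 <= ltilde PY ell pi x' yh'.
  by apply: integral_ge0 => w _; apply: integral_ge0 => y _; rewrite lee_fin.
elim: r x yh => [|r IH] x yh; first exact: ltilde_ge0.
rewrite adde_ge0//; apply: integral_ge0 => x' _.
by apply: le_ereal_inf_tmp => _ [b _ <-]; exact: IH.
Qed.

Lemma Vstar_ge0 n j (pi : measure W R) x : 0 <= Vstar K PY ell n j pi x.
Proof. by apply: le_ereal_inf_tmp => _ [b _ <-]; exact: Qaux_ge0. Qed.

Variable n : nat.

Lemma Qaux_le_integral_cost_to_go psi r k (pi : measure W R) (h : H k) :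
  pi [set: W] = 1 -> (i + k + r = n)%N -> admissible (k + r) psi ->
  Qaux K PY ell n r pi (hist_x h) (psi k h) <= \int[pi]_w cost psi r w h.
Proof.
move=> pi1; elim: r k h => [//|r IH] k h hn mpsi.
have mpsi' : admissible (k.+1 + r) psi by rewrite addSnnS.
rewrite integral_cost_to_goS// /= (_ : (n - r = (i + k).+1)%N); last by lia.
apply: leeD2l; apply: ge0_le_integral_nonmeas => x'.
  by apply: le_ereal_inf_tmp => _ [b _ <-]; exact: Qaux_ge0.
apply: le_trans; last by apply: (IH k.+1 _ _ mpsi'); lia.
by apply: ereal_inf_lbound; eexists.
Qed.

Lemma Vstar_le_integral_cost_to_go psi r k (pi : measure W R) (h : H k) :
  pi [set: W] = 1 -> (i + k + r = n)%N -> admissible (k + r) psi ->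
  Vstar K PY ell n (i + k) pi (hist_x h) <= \int[pi]_w cost psi r w h.
Proof.
move=> pi1 hn mpsi.
apply: le_trans; last exact: Qaux_le_integral_cost_to_go pi1 hn mpsi.
rewrite /Vstar /Qstar (_ : (n - (i + k) = r)%N); last by lia.
by apply: ereal_inf_lbound; eexists.
Qed.

Variables (post : R.-pker Zm ~> W) (psistar : nat -> measure W R -> X -> Yh).
Hypothesis psistar_min : forall j, (i <= j <= n)%N ->
  forall pi : measure W R, pi [set: W] = 1 ->
  forall x yh, Qstar K PY ell n j pi x (psistar j pi x) <= Qstar K PY ell n j pi x yh.

Let VstarE j (pi : measure W R) x : (i <= j <= n)%N -> pi [set: W] = 1 ->
  Vstar K PY ell n j pi x = Qstar K PY ell n j pi x (psistar j pi x).
Proof. by move=> ijn pi1; apply: ereal_inf_range_attained => yh; exact: psistar_min. Qed.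

Lemma integral_cost_to_go_star r k (h : H k) :
  (i + k + r = n)%N -> admissible (k + r) (star_policy post psistar i) ->
  \int[post (hist_z h)]_w cost (star_policy post psistar i) r w h =
  Vstar K PY ell n (i + k) (post (hist_z h)) (hist_x h).
Proof.
elim: r k h => [|r IH] k h hn mpsi.
  rewrite VstarE ?prob_kernel//; last by lia.
  by rewrite /Qstar -hn addn0 subnn.
have mpsi' : admissible (k.+1 + r) (star_policy post psistar i) by rewrite addSnnS.
rewrite integral_cost_to_goS ?prob_kernel// VstarE ?prob_kernel//; last by lia.
rewrite /Qstar (_ : (n - (i + k) = r.+1)%N); last by lia.
rewrite /= (_ : (n - r = (i + k).+1)%N); last by lia.
congr (_ + _); apply: eq_integral => x' _.
have hn' : (i + k.+1 + r = n)%N by lia.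
transitivity (Vstar K PY ell n (i + k.+1) (post (hist_z h)) x').
  exact: (IH k.+1 (((h, star_policy post psistar i h), x') : H k.+1) hn' mpsi').
by rewrite /Vstar /Qstar (_ : (n - (i + k.+1) = r)%N) //; lia.
Qed.

Lemma admissible_star_policy N :
  (forall j, (i <= j <= i + N)%N ->
    measurable_fun [set: Zm * X] (fun zx => psistar j (post zx.1) zx.2)) ->
  admissible N (star_policy post psistar i).
Proof.
move=> mstar k kN; apply: (measurableT_comp (mstar (i + k)%N _)
  (g := fun h : H k => (hist_z h, hist_x h))); first by lia.
exact: measurable_fun_pair (@measurable_hist_z k) (@measurable_hist_x k).
Qed.

Lemma expected_loss_posterior (PW : probability W R) (PZW : R.-pker W ~> Zm)
    (PXi : probability X R) psi :
  is_posterior PW PZW post -> admissible (n - i) psi ->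
  expected_loss K PY ell PW PZW PXi i n psi =
  \int[PW]_w \int[PZW w]_z \int[PXi]_x
    \int[post z]_w' cost psi (n - i) w' ((z, x) : H 0).
Proof.
move=> hpost mpsi.
have mc : measurable_fun [set: W * H 0] (fun p => cost psi (n - i) p.1 p.2).
  by apply: measurable_cost_to_go; rewrite add0n.
pose c q := cost psi (n - i) q.1.1 ((q.1.2, q.2) : H 0).
have mc' : measurable_fun [set: (W * Zm) * X] c.
  apply: (measurableT_comp mc (g := fun q : (W * Zm) * X => (q.1.1, (q.1.2, q.2) : H 0))).
  apply: measurable_fun_pair; first exact: measurableT_comp measurable_fst measurable_fst.
  exact: measurable_fun_pair (measurableT_comp measurable_snd measurable_fst) measurable_snd.
have c0 q : 0 <= c q by exact: cost_to_go_ge0.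
have mg : measurable_fun [set: W * Zm] (fun p => \int[PXi]_x c (p, x)).
  exact: (measurable_fun_fubini_tonelli_F (m2 := PXi) c mc' c0).
have g0 p : 0 <= \int[PXi]_x c (p, x) by exact: integral_ge0.
apply: etrans (integral_posterior hpost mg g0) _.
apply: eq_integral => w _; apply: eq_integral => z _.
apply: (@fubini_tonelli_finite _ _ _ _ _ _ _ (fun q : W * X => c ((q.1, z), q.2))).
- by rewrite prob_kernel ltry.
- exact: fin_num_fun_lty (fin_num_measure PXi).
- apply: measurableT_comp mc' _.
  apply: measurable_fun_pair => //; exact: measurable_fun_pair.
- by move=> q; exact: c0.
Qed.

End cost_to_go.

Theorem corollary1 (R : realType) (dX dY dYh dW dZ : measure_display)
    (X : measurableType dX) (Y : measurableType dY) (Yh : measurableType dYh)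
    (W : measurableType dW) (Zm : measurableType dZ)
    (K : nat -> R.-pker (X * Yh)%type ~> X)
    (PY : R.-pker (X * W)%type ~> Y)
    (PW : probability W R) (PZW : R.-pker W ~> Zm)
    (post : R.-pker Zm ~> W)
    (ell : X -> Y -> Yh -> R)
    (psistar : nat -> measure W R -> X -> Yh)
    (n i : nat) (PXi : probability X R) :
  (1 <= i <= n)%N ->
  is_posterior PW PZW post ->
  measurable_fun [set: (X * Y * Yh)%type] (fun t => ell t.1.1 t.1.2 t.2) ->
  (forall x y yh, (0 <= ell x y yh)%R) ->
  (forall j, (i <= j <= n)%N ->
     forall pi : measure W R, pi [set: W] = 1 ->
     forall (x : X) (yh : Yh),
       Qstar K PY ell n j pi x (psistar j pi x) <= Qstar K PY ell n j pi x yh) ->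
  (forall j, (i <= j <= n)%N ->
     measurable_fun [set: (Zm * X)%type]
       (fun zx : Zm * X => psistar j (post zx.1) zx.2)) ->
  let EV := \int[PW]_w \int[PZW w]_z \int[PXi]_x Vstar K PY ell n i (post z) x in
  [/\ admissible (n - i) (star_policy post psistar i),
      expected_loss K PY ell PW PZW PXi i n (star_policy post psistar i) = EV &
      forall psi : policy X Yh Zm, admissible (n - i) psi ->
        EV <= expected_loss K PY ell PW PZW PXi i n psi].
Proof.
move=> /andP[_ ileqn] hpost mell ell_ge0 psistar_min mstar EV.
have hn : (i + 0 + (n - i) = n)%N by lia.
have star_adm : admissible (n - i) (star_policy post psistar i).
  by apply: admissible_star_policy => j ?; apply: mstar; lia.
split=> [//||psi psi_adm].
  rewrite (expected_loss_posterior K PY mell ell_ge0 PXi hpost star_adm).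
  apply: eq_integral => w _; apply: eq_integral => z _; apply: eq_integral => x _.
  have star_adm0 : admissible (0 + (n - i)) (star_policy post psistar i).
    by rewrite add0n.
  by rewrite (integral_cost_to_go_star mell ell_ge0 psistar_min
    ((z, x) : projT2 (Hist X Yh Zm 0)) hn star_adm0) addn0.
rewrite (expected_loss_posterior K PY mell ell_ge0 PXi hpost psi_adm).
apply: ge0_le_integral_nonmeas => [w|w].
  by apply: integral_ge0 => z _; apply: integral_ge0 => x _; exact: Vstar_ge0.
apply: ge0_le_integral_nonmeas => [z|z].
  by apply: integral_ge0 => x _; exact: Vstar_ge0.
apply: ge0_le_integral_nonmeas => [x|x]; first exact: Vstar_ge0.
have psi_adm0 : admissible (0 + (n - i)) psi by rewrite add0n.
have post1 : post z [set: W] = 1 by exact: prob_kernel.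
have := Vstar_le_integral_cost_to_go K PY mell ell_ge0
  ((z, x) : projT2 (Hist X Yh Zm 0)) post1 hn psi_adm0.
by rewrite addn0.
Qed.
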